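(* Let $n\ge 4$. The number of semimagic quad squares using the EvenQuads-$2^n$ deck equals $2^n(2^n-1)(2^n-2)(2^n-4)(2^n-8)$ times the number of semimagic quad squares of type C in that deck. The same holds with ''semimagic'' replaced by ''magic'', and with ''semimagic'' replaced by ''strongly magic''.
   Context: The EvenQuads-$2^n$ deck consists of $2^n$ cards identified with the integers $0,1,\dots,2^n-1$ (equivalently, via binary expansion, with the vectors of $\mathbb{Z}_2^n$). Four cards $a,b,c,d$ form a quad if and only if $a\oplus b\oplus c\oplus d=0$, where $\oplus$ denotes bitwise XOR. A quad square is a $4\times 4$ array of $16$ pairwise distinct cards of the deck. It is semimagic if each of its four rows and each of its four columns forms a quad; it is magic if, in addition, each of its two diagonals forms a quad. Index rows and columns by $0,1,2,3$; a quad square is strongly magic if for any four distinct positions $(i_1,j_1),\dots,(i_4,j_4)$ with $i_1\oplus i_2\oplus i_3\oplus i_4=0$ and $j_1\oplus j_2\oplus j_3\oplus j_4=0$, the four cards in these positions form a quad. A quad square is of type C if its first row is $0,1,2,3$ (left to right) and its first column is $0,4,8,12$ (top to bottom). *)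

From Stdlib Require Import PeanoNat.
From mathcomp Require Import all_boot.
Set Implicit Arguments. Unset Strict Implicit. Unset Printing Implicit Defensive.

Definition card (n : nat) := 'I_(2 ^ n).

Definition is_quad (a b c d : nat) : bool :=
  Nat.lxor (Nat.lxor (Nat.lxor a b) c) d == 0.

Definition pos := ('I_4 * 'I_4)%type.

Definition array4 (n : nat) := {ffun pos -> card n}.

Definition quad_square n (Q : array4 n) : bool := injectiveb Q.

Definition entry n (Q : array4 n) (i j : 'I_4) : nat := val (Q (i, j)).

Definition o0 : 'I_4 := @Ordinal 4 0 isT.
Definition o1 : 'I_4 := @Ordinal 4 1 isT.
Definition o2 : 'I_4 := @Ordinal 4 2 isT.
Definition o3 : 'I_4 := @Ordinal 4 3 isT.

Definition rows_quads n (Q : array4 n) : bool :=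
  [forall i : 'I_4, is_quad (entry Q i o0) (entry Q i o1) (entry Q i o2) (entry Q i o3)].

Definition cols_quads n (Q : array4 n) : bool :=
  [forall j : 'I_4, is_quad (entry Q o0 j) (entry Q o1 j) (entry Q o2 j) (entry Q o3 j)].

Definition semimagic n (Q : array4 n) : bool :=
  quad_square Q && rows_quads Q && cols_quads Q.

Definition diags_quads n (Q : array4 n) : bool :=
  is_quad (entry Q o0 o0) (entry Q o1 o1) (entry Q o2 o2) (entry Q o3 o3) &&
  is_quad (entry Q o0 o3) (entry Q o1 o2) (entry Q o2 o1) (entry Q o3 o0).

Definition magic n (Q : array4 n) : bool := semimagic Q && diags_quads Q.

Definition strongly_magic n (Q : array4 n) : bool :=
  quad_square Q &&
  [forall p1 : pos, forall p2 : pos, forall p3 : pos, forall p4 : pos,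
     (uniq [:: p1; p2; p3; p4] &&
      is_quad (val p1.1) (val p2.1) (val p3.1) (val p4.1) &&
      is_quad (val p1.2) (val p2.2) (val p3.2) (val p4.2)) ==>
     is_quad (val (Q p1)) (val (Q p2)) (val (Q p3)) (val (Q p4))].

Definition typeC n (Q : array4 n) : bool :=
  [forall j : 'I_4, entry Q o0 j == val j] &&
  [forall i : 'I_4, entry Q i o0 == 4 * val i].

From Stdlib Require Import PeanoNat.
From mathcomp Require Import all_boot.
Set Implicit Arguments. Unset Strict Implicit. Unset Printing Implicit Defensive.

(* Quad-preserving permutations of the deck, such as translations x |-> x (+) v and
   transvections x |-> x (+) x_j v (x_j the j-th bit of x, and bit j of v clear), act on quad
   squares by relabelling and preserve all three magic properties.  If the first row and column
   of Q are quads, the frame (Q00, Q01, Q02, Q10, Q20) is affinely independent: each point lies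
   outside the affine span of the previous ones, which leaves N (N-1) (N-2) (N-4) (N-8) choices.
   The action is transitive on independent frames: after translating the first point to 0, the
   k-th point lies outside the span {0, ..., 2^k - 1} of the already normalised ones, so it has a
   bit >= k set, and at most two transvections move it to 2^k while fixing everything below 2^k.
   Hence every fiber of Q |-> frame has the size of the fiber over (0, 1, 2, 4, 8), which
   consists of the squares of type C. *)

Lemma expn_Natpow m k : m ^ k = Nat.pow m k.
Proof. by elim: k => //= k IH; rewrite expnS IH mulnE. Qed.

Lemma pow2_gt0 k : 0 < 2 ^ k.
Proof. by rewrite expn_gt0. Qed.

Lemma ltn_pow2_testbit a k : a < 2 ^ k <-> forall i, k <= i -> Nat.testbit a i = false.
Proof.
rewrite expn_Natpow; split=> [/ltP a_lt i /leP ki | a_hi].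
  apply/Nat.testbit_false; rewrite Nat.div_small //.
  exact: Nat.lt_le_trans a_lt (Nat.pow_le_mono_r _ _ _ _ ki).
have -> : a = a mod Nat.pow 2 k.
  apply: Nat.bits_inj => i; case: (Nat.lt_ge_cases i k) => ik.
    by rewrite Nat.mod_pow2_bits_low.
  by rewrite Nat.mod_pow2_bits_high // a_hi //; apply/leP.
exact/ltP/Nat.mod_upper_bound/Nat.pow_nonzero.
Qed.

Lemma testbit_pow2 k i : Nat.testbit (2 ^ k) i = (k == i).
Proof.
rewrite expn_Natpow Nat.pow2_bits_eqb.
by case: Nat.eqb_spec => [->|/eqP/negbTE ->]; rewrite ?eqxx.
Qed.

Lemma lxor_ltn_pow2 k a b : a < 2 ^ k -> b < 2 ^ k -> Nat.lxor a b < 2 ^ k.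
Proof.
move=> /ltn_pow2_testbit a_hi /ltn_pow2_testbit b_hi; apply/ltn_pow2_testbit => i ki.
by rewrite Nat.lxor_spec a_hi // b_hi.
Qed.

Lemma is_quad_testbit a b c d : is_quad a b c d <->
  forall i, xorb (xorb (xorb (Nat.testbit a i) (Nat.testbit b i)) (Nat.testbit c i))
                 (Nat.testbit d i) = false.
Proof.
split=> [/eqP abcd i | abcd]; first by rewrite -!Nat.lxor_spec abcd Nat.bits_0.
by apply/eqP/Nat.bits_inj => i; rewrite !Nat.lxor_spec abcd Nat.bits_0.
Qed.

Lemma is_quadE a b c d : is_quad a b c d = (d == Nat.lxor (Nat.lxor a b) c).
Proof.
by apply/eqP/eqP => [/Nat.lxor_eq_0_iff | ->]; last apply/Nat.lxor_eq_0_iff.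
Qed.

Ltac bit_cases i :=
  repeat match goal with
  | |- context [Nat.testbit ?x i] => destruct (Nat.testbit x i)
  | H : context [Nat.testbit ?x i] |- _ => destruct (Nat.testbit x i)
  end.

Definition translation (v x : nat) : nat := Nat.lxor x v.

Lemma translation_involutive v : involutive (translation v).
Proof. by move=> x; rewrite /translation Nat.lxor_assoc Nat.lxor_nilpotent Nat.lxor_0_r. Qed.

Lemma is_quad_translation v a b c d :
  is_quad a b c d ->
  is_quad (translation v a) (translation v b) (translation v c) (translation v d).
Proof.
move=> /is_quad_testbit abcd; apply/is_quad_testbit => i.
by rewrite !Nat.lxor_spec; move: (abcd i); bit_cases i.
Qed.

Lemma translation_ltn k v : v < 2 ^ k -> forall x, x < 2 ^ k -> translation v x < 2 ^ k.
Proof. by move=> v_lt x x_lt; apply: lxor_ltn_pow2. Qed.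

Definition transvection (j v x : nat) : nat := if Nat.testbit x j then Nat.lxor x v else x.

Lemma testbit_transvection j v x i :
  Nat.testbit (transvection j v x) i = xorb (Nat.testbit x i) (Nat.testbit x j && Nat.testbit v i).
Proof.
by rewrite /transvection; case: (Nat.testbit x j); rewrite ?Nat.lxor_spec //=; case: Nat.testbit.
Qed.

Lemma transvection_involutive j v : Nat.testbit v j = false -> involutive (transvection j v).
Proof.
move=> vj x; apply: Nat.bits_inj => i; rewrite !testbit_transvection vj.
by bit_cases i; bit_cases j.
Qed.

Lemma is_quad_transvection j v a b c d : is_quad a b c d ->
  is_quad (transvection j v a) (transvection j v b) (transvection j v c) (transvection j v d).
Proof.
move=> /is_quad_testbit abcd; apply/is_quad_testbit => i; rewrite !testbit_transvection.
by move: (abcd i) (abcd j); bit_cases i; bit_cases j.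
Qed.

Lemma transvection_ltn k j v : v < 2 ^ k -> forall x, x < 2 ^ k -> transvection j v x < 2 ^ k.
Proof. by move=> v_lt x x_lt; rewrite /transvection; case: ifP => // _; apply: lxor_ltn_pow2. Qed.

Lemma transvection_id j v x : Nat.testbit x j = false -> transvection j v x = x.
Proof. by rewrite /transvection => ->. Qed.

Definition quad_preserving n (g : card n -> card n) :=
  injective g /\ forall a b c d : card n, is_quad (g a) (g b) (g c) (g d) = is_quad a b c d.

Lemma quad_preserving_comp n (g h : card n -> card n) :
  quad_preserving g -> quad_preserving h -> quad_preserving (g \o h).
Proof.
move=> [g_inj g_quad] [h_inj h_quad]; split; first exact: inj_comp.
by move=> a b c d /=; rewrite g_quad h_quad.
Qed.

Definition card_map n (f : nat -> nat) (f_lt : forall x, x < 2 ^ n -> f x < 2 ^ n) (x : card n) :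
  card n := Ordinal (f_lt _ (ltn_ord x)).

Lemma quad_preserving_card_map n f (f_lt : forall x, x < 2 ^ n -> f x < 2 ^ n) :
  involutive f -> (forall a b c d, is_quad a b c d -> is_quad (f a) (f b) (f c) (f d)) ->
  quad_preserving (card_map f_lt).
Proof.
move=> fK f_quad; split=> [x y /(congr1 val) /= fxy | a b c d /=].
  by apply: val_inj; rewrite -[val x]fK fxy fK.
by apply/idP/idP => [/f_quad|/f_quad //]; rewrite !fK.
Qed.

(* The card with value m, or 0 if m >= 2 ^ n. *)
Definition card_of n m : card n := insubd (Ordinal (pow2_gt0 n)) m.

Lemma val_card_of n m : m < 2 ^ n -> val (card_of n m) = m.
Proof. by rewrite val_insubd => ->. Qed.

Lemma val_card_of_lt16 n m : 4 <= n -> m < 16 -> val (card_of n m) = m.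
Proof. by move=> hn m16; rewrite val_card_of // (leq_trans m16) // -[16]/(2 ^ 4) leq_exp2l. Qed.

Definition xor3 n (a b c : card n) : card n :=
  Ordinal (lxor_ltn_pow2 (lxor_ltn_pow2 (ltn_ord a) (ltn_ord b)) (ltn_ord c)).

Lemma is_quad_xor3 n (a b c d : card n) : is_quad a b c d = (d == xor3 a b c).
Proof. exact: is_quadE. Qed.

Lemma quad_preserving_xor3 n (g : card n -> card n) a b c :
  quad_preserving g -> g (xor3 a b c) = xor3 (g a) (g b) (g c).
Proof. by case=> _ g_quad; apply/eqP; rewrite -is_quad_xor3 g_quad is_quad_xor3. Qed.

Lemma exists_translation n (a : card n) : exists2 g, quad_preserving g & g a = card_of n 0.
Proof.
exists (card_map (translation_ltn (ltn_ord a))).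
  exact: quad_preserving_card_map (@translation_involutive _) (@is_quad_translation _).
by apply: val_inj; rewrite val_card_of ?pow2_gt0 //= /translation Nat.lxor_nilpotent.
Qed.

Lemma normalize_testbit n k (w : card n) : k < n -> Nat.testbit w k ->
  exists2 g, quad_preserving g &
    g w = card_of n (2 ^ k) /\ forall x : card n, x < 2 ^ k -> g x = x.
Proof.
move=> kn wk; have pow_lt : 2 ^ k < 2 ^ n by rewrite ltn_exp2l.
pose v := Nat.lxor w (2 ^ k).
have vk : Nat.testbit v k = false by rewrite Nat.lxor_spec wk testbit_pow2 eqxx.
exists (card_map (transvection_ltn k (lxor_ltn_pow2 (ltn_ord w) pow_lt))).
  exact: quad_preserving_card_map (transvection_involutive vk) (@is_quad_transvection _ _).
split=> [|x /ltn_pow2_testbit x_hi]; apply: val_inj => /=.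
  by rewrite val_card_of // /transvection wk -Nat.lxor_assoc Nat.lxor_nilpotent Nat.lxor_0_l.
by rewrite transvection_id // x_hi.
Qed.

Lemma normalize_pow2 n k (w : card n) : k < n -> 2 ^ k <= w ->
  exists2 g, quad_preserving g &
    g w = card_of n (2 ^ k) /\ forall x : card n, x < 2 ^ k -> g x = x.
Proof.
move=> kn kw; have [wk|wk] := boolP (Nat.testbit w k); first exact: normalize_testbit.
have w_gt0 : 0 < w := leq_trans (pow2_gt0 k) kw.
pose j := Nat.log2 w.
have wj : Nat.testbit w j by apply: Nat.bit_log2; case: (val w) w_gt0.
have kj : k < j.
  rewrite ltn_neqAle; apply/andP; split; first by apply: contraNneq wk => ->.
  by apply/leP/Nat.log2_le_pow2; [exact/ltP | rewrite -expn_Natpow; exact/leP].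
have pow_lt : 2 ^ k < 2 ^ n by rewrite ltn_exp2l.
have vj : Nat.testbit (2 ^ k) j = false by rewrite testbit_pow2 ltn_eqF.
pose h := card_map (transvection_ltn j pow_lt).
have h_qp : quad_preserving h.
  exact: quad_preserving_card_map (transvection_involutive vj) (@is_quad_transvection _ _).
have hw : Nat.testbit (h w) k by rewrite testbit_transvection wj (negbTE wk) testbit_pow2 eqxx.
have [g g_qp [gw g_fix]] := normalize_testbit kn hw.
exists (g \o h); first exact: quad_preserving_comp.
split=> // x xk /=; rewrite -[RHS]g_fix //; congr g; apply: val_inj => /=.
by rewrite transvection_id //; move/ltn_pow2_testbit: xk; apply; apply: ltnW.
Qed.

Lemma exists_normalizer n k (s : seq (card n)) (w : card n) : k < n ->
  (forall m, m < 2 ^ k -> m \in map val s) -> w \notin s ->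
  exists2 g, quad_preserving g &
    g w = card_of n (2 ^ k) /\ forall m, m < 2 ^ k -> g (card_of n m) = card_of n m.
Proof.
move=> kn s_cover w_new.
have kw : 2 ^ k <= w.
  by rewrite leqNgt; apply: contra w_new => /s_cover; rewrite (mem_map val_inj).
have [g g_qp [gw g_fix]] := normalize_pow2 kn kw.
exists g => //; split=> // m mk; apply: g_fix.
have m_lt : m < 2 ^ n by rewrite (ltn_trans mk) ?ltn_exp2l.
by rewrite val_card_of.
Qed.

Definition affine_span2 n (z : card n * card n) : seq (card n) :=
  let: (a, b) := z in [:: a; b].

Definition affine_span3 n (z : card n * card n * card n) : seq (card n) :=
  let: (a, b, c) := z in [:: a; b; c; xor3 a b c].

Definition affine_span4 n (z : card n * card n * card n * card n) : seq (card n) :=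
  let: (a, b, c, d) := z in
  [:: a; b; c; d; xor3 a b c; xor3 a b d; xor3 a c d; xor3 b c d].

Definition frame n := (card n * card n * card n * card n * card n)%type.

Definition indep2 n (z : card n * card n) := z.2 \notin [:: z.1].
Definition indep3 n (z : card n * card n * card n) := indep2 z.1 && (z.2 \notin affine_span2 z.1).
Definition indep4 n (z : card n * card n * card n * card n) :=
  indep3 z.1 && (z.2 \notin affine_span3 z.1).
Definition indep5 n (t : frame n) := indep4 t.1 && (t.2 \notin affine_span4 t.1).

Lemma indep5E n (a b c d e : card n) : indep5 (a, b, c, d, e) =
  [&& b \notin [:: a], c \notin affine_span2 (a, b), d \notin affine_span3 (a, b, c)
    & e \notin affine_span4 (a, b, c, d)].
Proof. by rewrite /indep5 /indep4 /indep3 /indep2 /= !andbA. Qed.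

(* Bitwise case analysis proves a disequality between xor-combinations of cards
   from one of the disequalities in the context. *)
Ltac xor_neq :=
  let uv := fresh "uv" in let i := fresh "i" in
  apply/negP => /eqP /(congr1 val) /=; intro uv;
  match goal with H : is_true (?p != ?q) |- False =>
    case/negP: H; apply/eqP/val_inj/Nat.bits_inj; intro i; simpl;
    move/(f_equal (Nat.testbit^~ i)): uv; rewrite ?Nat.lxor_spec; bit_cases i; done
  end.

Ltac xor_distinct :=
  rewrite /= ?inE ?negb_or;
  repeat match goal with H : is_true (_ && _) |- _ => case/andP: H => ? ? end;
  repeat (apply/andP; split); try done; xor_neq.

Lemma uniq_affine_span3 n (z : card n * card n * card n) : indep3 z -> uniq (affine_span3 z).
Proof. by case: z => [[a b] c]; rewrite /indep3 /indep2 /= !inE !negb_or => ?; xor_distinct. Qed.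

Lemma uniq_affine_span4 n (z : card n * card n * card n * card n) :
  indep4 z -> uniq (affine_span4 z).
Proof.
by case: z => [[[a b] c] d]; rewrite /indep4 /indep3 /indep2 /= !inE !negb_or => ?; xor_distinct.
Qed.

Lemma indep5_of_uniq n (a b c d e : card n) :
  uniq [:: a; b; c; xor3 a b c; d; e; xor3 a d e] -> indep5 (a, b, c, d, e).
Proof. by rewrite indep5E /= !inE !negb_or => ?; xor_distinct. Qed.

Lemma card_notin (T : finType) (s : seq T) : uniq s -> #|[pred y | y \notin s]| = #|T| - size s.
Proof. by move=> s_uniq; rewrite -(card_uniqP s_uniq) -(cardC (mem s)) addKn. Qed.

Lemma card_extend (A B : finType) (p : pred A) (s : A -> seq B) k (q : pred (A * B)) :
  (forall z, q z = p z.1 && (z.2 \notin s z.1)) ->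
  (forall x, p x -> uniq (s x) /\ size (s x) = k) ->
  #|[pred z | q z]| = #|[pred x | p x]| * (#|B| - k).
Proof.
move=> qE s_uniq; rewrite -sum1_card (eq_bigl _ _ qE) /=.
rewrite -(pair_big_dep p (fun x y => y \notin s x) (fun _ _ => 1)) /=.
rewrite -sum_nat_const; apply: eq_bigr => x px; rewrite sum1_card.
by have [sx_uniq <-] := s_uniq x px; rewrite -card_notin.
Qed.

Lemma card_indep5 n : #|[pred t : frame n | indep5 t]| =
  2 ^ n * (2 ^ n - 1) * (2 ^ n - 2) * (2 ^ n - 4) * (2 ^ n - 8).
Proof.
rewrite (card_extend (p := @indep4 n) (s := @affine_span4 n) (k := 8)) //; last first.
  by move=> [[[a b] c] d] z_indep; rewrite uniq_affine_span4.
rewrite (card_extend (p := @indep3 n) (s := @affine_span3 n) (k := 4)) //; last first.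
  by move=> [[a b] c] z_indep; rewrite uniq_affine_span3.
rewrite (card_extend (p := @indep2 n) (s := @affine_span2 n) (k := 2)) //; last first.
  by move=> [a b]; rewrite /indep2 /= inE => ba; rewrite inE eq_sym ba.
by rewrite (card_extend (p := predT) (s := fun a => [:: a]) (k := 1)) // card_ord.
Qed.

Definition frame_map n (g : card n -> card n) (t : frame n) : frame n :=
  let: (a, b, c, d, e) := t in (g a, g b, g c, g d, g e).

Lemma frame_mapE n (g : card n -> card n) a b c d e :
  frame_map g (a, b, c, d, e) = (g a, g b, g c, g d, g e).
Proof. by []. Qed.

Lemma frame_map_comp n (g h : card n -> card n) t :
  frame_map (g \o h) t = frame_map g (frame_map h t).
Proof. by case: t => [[[[a b] c] d] e]. Qed.

Lemma frame_map_inj n (g : card n -> card n) : injective g -> injective (frame_map g).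
Proof.
move=> g_inj [[[[a b] c] d] e] [[[[a' b'] c'] d'] e'] /= [].
by move=> /g_inj -> /g_inj -> /g_inj -> /g_inj -> /g_inj ->.
Qed.

Lemma indep5_frame_map n (g : card n -> card n) t :
  quad_preserving g -> indep5 (frame_map g t) = indep5 t.
Proof.
move=> g_qp; have [g_inj _] := g_qp; case: t => [[[[a b] c] d] e].
rewrite !indep5E /= -!(quad_preserving_xor3 _ _ _ g_qp).
by rewrite !inE !(inj_eq g_inj).
Qed.

Definition std_frame n : frame n :=
  (card_of n 0, card_of n 1, card_of n 2, card_of n 4, card_of n 8).

Definition std_reachable n (t : frame n) :=
  exists2 g, quad_preserving g & frame_map g t = std_frame n.

Lemma std_reachable_frame_map n (h : card n -> card n) t :
  quad_preserving h -> std_reachable (frame_map h t) -> std_reachable t.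
Proof.
move=> h_qp [g g_qp gt]; exists (g \o h); first exact: quad_preserving_comp.
by rewrite frame_map_comp.
Qed.

Lemma std_reachable_from012 n (d e : card n) : 4 <= n ->
  indep5 (card_of n 0, card_of n 1, card_of n 2, d, e) ->
  std_reachable (card_of n 0, card_of n 1, card_of n 2, d, e).
Proof.
move=> hn t_indep; move: (t_indep); rewrite indep5E => /and4P [_ _ d_new _].
case: (exists_normalizer (leq_trans (isT : 2 < 4) hn) _ d_new) => [|h h_qp [hd h_fix]].
  by move=> m; rewrite /= !val_card_of_lt16 //; case: m => [|[|[|[|]]]].
apply: (std_reachable_frame_map h_qp).
rewrite -(indep5_frame_map _ h_qp) frame_mapE hd !h_fix // in t_indep *.
move: t_indep; rewrite indep5E => /and4P [_ _ _ e_new].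
case: (exists_normalizer (leq_trans (isT : 3 < 4) hn) _ e_new) => [|g g_qp [ge g_fix]].
  by move=> m; rewrite /= !val_card_of_lt16 //; case: m => [|[|[|[|[|[|[|[|]]]]]]]].
by exists g; rewrite // frame_mapE ge !g_fix.
Qed.

Lemma std_reachable_from0 n (b c d e : card n) : 4 <= n ->
  indep5 (card_of n 0, b, c, d, e) -> std_reachable (card_of n 0, b, c, d, e).
Proof.
move=> hn t_indep; move: (t_indep); rewrite indep5E => /and4P [b_new _ _ _].
case: (exists_normalizer (leq_trans (isT : 0 < 4) hn) _ b_new) => [|h h_qp [hb h_fix]].
  by case=> // _; rewrite /= val_card_of_lt16.
apply: (std_reachable_frame_map h_qp).
rewrite -(indep5_frame_map _ h_qp) frame_mapE hb !h_fix // in t_indep *.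
move: (t_indep); rewrite indep5E => /and4P [_ c_new _ _].
case: (exists_normalizer (leq_trans (isT : 1 < 4) hn) _ c_new) => [|g g_qp [gc g_fix]].
  by move=> m; rewrite /= !val_card_of_lt16 //; case: m => [|[|]].
apply: (std_reachable_frame_map g_qp).
rewrite -(indep5_frame_map _ g_qp) frame_mapE gc !g_fix // in t_indep *.
exact: std_reachable_from012.
Qed.

Lemma frame_transitive n (t : frame n) : 4 <= n -> indep5 t -> std_reachable t.
Proof.
case: t => [[[[a b] c] d] e] hn t_indep.
have [h h_qp ha] := exists_translation a.
apply: (std_reachable_frame_map h_qp).
rewrite -(indep5_frame_map _ h_qp) frame_mapE ha in t_indep *.
exact: std_reachable_from0.
Qed.

Definition relabel n (g : card n -> card n) (Q : array4 n) : array4 n := [ffun p => g (Q p)].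

Lemma relabel_inj n (g : card n -> card n) : injective g -> injective (relabel g).
Proof.
move=> g_inj Q Q' /ffunP QQ'; apply/ffunP => p.
by apply: g_inj; move: (QQ' p); rewrite !ffunE.
Qed.

Definition relabel_invariant n (P : pred (array4 n)) :=
  forall g Q, quad_preserving g -> P (relabel g Q) = P Q.

Section RelabelInvariance.

Variables (n : nat) (g : card n -> card n) (Q : array4 n).
Hypothesis g_qp : quad_preserving g.

Lemma quad_square_relabel : quad_square (relabel g Q) = quad_square Q.
Proof.
have [g_inj _] := g_qp; apply/injectiveP/injectiveP => Q_inj p q pq.
  by apply: Q_inj; rewrite !ffunE pq.
by apply/Q_inj/g_inj; move: pq; rewrite !ffunE.
Qed.

Lemma rows_quads_relabel : rows_quads (relabel g Q) = rows_quads Q.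
Proof. by apply: eq_forallb => i; rewrite /entry !ffunE g_qp.2. Qed.

Lemma cols_quads_relabel : cols_quads (relabel g Q) = cols_quads Q.
Proof. by apply: eq_forallb => j; rewrite /entry !ffunE g_qp.2. Qed.

Lemma diags_quads_relabel : diags_quads (relabel g Q) = diags_quads Q.
Proof. by rewrite /diags_quads /entry !ffunE !g_qp.2. Qed.

End RelabelInvariance.

Lemma semimagic_relabel n : relabel_invariant (@semimagic n).
Proof.
move=> g Q g_qp.
by rewrite /semimagic quad_square_relabel // rows_quads_relabel // cols_quads_relabel.
Qed.

Lemma magic_relabel n : relabel_invariant (@magic n).
Proof. by move=> g Q g_qp; rewrite /magic semimagic_relabel // diags_quads_relabel. Qed.

Lemma strongly_magic_relabel n : relabel_invariant (@strongly_magic n).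
Proof.
move=> g Q g_qp; rewrite /strongly_magic quad_square_relabel //; congr (_ && _).
do 4![apply: eq_forallb => ?]; by rewrite !ffunE g_qp.2.
Qed.

Definition frame_of n (Q : array4 n) : frame n :=
  (Q (o0, o0), Q (o0, o1), Q (o0, o2), Q (o1, o0), Q (o2, o0)).

Lemma frame_of_relabel n (g : card n -> card n) Q :
  frame_of (relabel g Q) = frame_map g (frame_of Q).
Proof. by rewrite /frame_of !ffunE. Qed.

Lemma card_fiber_frame_map n (P : pred (array4 n)) g t :
  relabel_invariant P -> quad_preserving g ->
  #|[pred Q | P Q && (frame_of Q == frame_map g t)]| = #|[pred Q | P Q && (frame_of Q == t)]|.
Proof.
move=> P_inv g_qp; have [g_inj _] := g_qp.
transitivity #|[set Q | P Q && (frame_of Q == frame_map g t)]|.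
  by apply: eq_card => Q; rewrite inE.
rewrite -(card_preimset _ (relabel_inj g_inj)); apply: eq_card => Q.
by rewrite !inE (P_inv g Q g_qp) frame_of_relabel (inj_eq (frame_map_inj g_inj)).
Qed.

Definition framed n (Q : array4 n) : bool :=
  [&& quad_square Q,
      is_quad (entry Q o0 o0) (entry Q o0 o1) (entry Q o0 o2) (entry Q o0 o3)
    & is_quad (entry Q o0 o0) (entry Q o1 o0) (entry Q o2 o0) (entry Q o3 o0)].

Lemma semimagic_framed n (Q : array4 n) : semimagic Q -> framed Q.
Proof.
case/andP=> /andP [Q_inj /forallP rows] /forallP cols.
by apply/and3P; split; [|apply: rows|apply: cols].
Qed.

Lemma magic_framed n (Q : array4 n) : magic Q -> framed Q.
Proof. by case/andP=> /semimagic_framed. Qed.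

Lemma strongly_magic_framed n (Q : array4 n) : strongly_magic Q -> framed Q.
Proof.
case/andP=> Q_inj /forallP Q_quads; apply/and3P; split=> //;
  by move/forallP/(_ _)/forallP/(_ _)/forallP/(_ _)/implyP: (Q_quads (o0, o0)); apply.
Qed.

Lemma indep5_frame_of n (Q : array4 n) : framed Q -> indep5 (frame_of Q).
Proof.
case/and3P=> /injectiveP Q_inj; rewrite /entry !is_quad_xor3 => /eqP Q03 /eqP Q30.
apply: indep5_of_uniq; rewrite -Q03 -Q30.
pose cross := [:: (o0, o0); (o0, o1); (o0, o2); (o0, o3); (o1, o0); (o2, o0); (o3, o0)].
by rewrite -[[:: _; _; _; _; _; _; _]]/(map Q cross) map_inj_uniq.
Qed.

Lemma forall_ord4 (P : pred 'I_4) : [forall j, P j] = [&& P o0, P o1, P o2 & P o3].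
Proof.
apply/forallP/and4P => [P_all | [P0 P1 P2 P3] [[|[|[|[|j]]]] j4]] //.
- by have -> : Ordinal j4 = o0 by apply: val_inj.
- by have -> : Ordinal j4 = o1 by apply: val_inj.
- by have -> : Ordinal j4 = o2 by apply: val_inj.
- by have -> : Ordinal j4 = o3 by apply: val_inj.
Qed.

Lemma typeC_frame_of n (Q : array4 n) : 4 <= n -> framed Q ->
  typeC Q = (frame_of Q == std_frame n).
Proof.
move=> hn /and3P [_]; rewrite /entry !is_quadE => /eqP Q03 /eqP Q30.
rewrite /typeC !forall_ord4 /entry Q03 Q30 /frame_of /std_frame !xpair_eqE.
rewrite -!val_eqE /= !val_card_of_lt16 //.
apply/idP/idP => [/andP [/and4P [/eqP-> /eqP-> /eqP-> _] /and4P [_ /eqP-> /eqP-> _]] //|].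
by case/andP=> /andP [/andP [/andP [/eqP-> /eqP->] /eqP->] /eqP->] /eqP->.
Qed.

Lemma card_relabel_invariant n (P : pred (array4 n)) : 4 <= n ->
  relabel_invariant P -> (forall Q, P Q -> framed Q) ->
  #|[pred Q : array4 n | P Q]| =
    2 ^ n * (2 ^ n - 1) * (2 ^ n - 2) * (2 ^ n - 4) * (2 ^ n - 8) *
    #|[pred Q : array4 n | P Q && typeC Q]|.
Proof.
move=> hn P_inv P_framed.
have fiber_std t : indep5 t ->
    #|[pred Q | P Q && (frame_of Q == t)]| = #|[pred Q | P Q && typeC Q]|.
  move=> t_indep; have [g g_qp gt] := frame_transitive hn t_indep.
  rewrite -(card_fiber_frame_map t P_inv g_qp) gt; apply: eq_card => Q; rewrite !inE.
  by case PQ: (P Q) => //=; rewrite typeC_frame_of // P_framed.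
rewrite -sum1_card (partition_big (@frame_of n) (@indep5 n)); last first.
  by move=> Q /P_framed/indep5_frame_of.
rewrite -card_indep5 -sum_nat_const; apply: eq_bigr => t t_indep.
by rewrite -(fiber_std t t_indep) -sum1_card; apply: eq_bigl.
Qed.

Theorem mainTheorem1 (n : nat) (hn : 4 <= n) :
  let N := 2 ^ n in
  let c := N * (N - 1) * (N - 2) * (N - 4) * (N - 8) in
  #|[pred Q : array4 n | semimagic Q]| = c * #|[pred Q : array4 n | semimagic Q && typeC Q]|
  /\ #|[pred Q : array4 n | magic Q]| = c * #|[pred Q : array4 n | magic Q && typeC Q]|
  /\ #|[pred Q : array4 n | strongly_magic Q]|
       = c * #|[pred Q : array4 n | strongly_magic Q && typeC Q]|.
Proof.
move=> N c; split; [|split]; apply: card_relabel_invariant => //.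
- exact: semimagic_relabel.
- exact: semimagic_framed.
- exact: magic_relabel.
- exact: magic_framed.
- exact: strongly_magic_relabel.
- exact: strongly_magic_framed.
Qed.
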